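(* Let $D$ be a pv-monoid (idempotent, with symmetric valuation function), $P$ a nonempty finite set of ports and $\zeta\in PCL(D,P)$. Then for every $\gamma\in C(P)$, \[\|\sim\zeta\|(\gamma)=\bigoplus_{\gamma'\in C(P),\ \gamma'\subseteq\gamma}\|\zeta\|(\gamma').\]
   Context: A valuation monoid $(D,\oplus,\mathrm{val},0)$ consists of a commutative monoid $(D,\oplus,0)$ and a map $\mathrm{val}:D^+\to D$ ($D^+$ = nonempty finite sequences over $D$) with $\mathrm{val}(d)=d$ and $\mathrm{val}(d_1,\dots,d_n)=0$ whenever some $d_i=0$. A pv-monoid $(D,\oplus,\mathrm{val},\otimes,0,1)$ is a valuation monoid with a binary operation $\otimes$ and an element $1$ such that $\mathrm{val}(1,\dots,1)=1$ for any $n\ge1$ arguments, $0\otimes d=d\otimes0=0$, $1\otimes d=d\otimes1=d$. Standing assumption: $D$ is idempotent ($d\oplus d=d$) and $\mathrm{val}$ is symmetric. $I(P)$ is the set of nonempty subsets of $P$, $C(P)$ the set of nonempty subsets of $I(P)$. PIL formulas: $\phi::=true\mid p\mid\overline{\phi}\mid\phi\vee\phi$ ($p\in P$), $\alpha\models_i p$ iff $p\in\alpha$, other connectives as usual. PCL formulas: $f::=true\mid\phi\mid\neg f\mid f\sqcup f\mid f+f$; $\gamma\models\phi$ iff every $\alpha\in\gamma$ satisfies $\phi$; $\neg,\sqcup$ are complement and union; $\gamma\models f_1+f_2$ iff $\gamma=\gamma_1\cup\gamma_2$ with $\gamma_1,\gamma_2\in C(P)$, $\gamma_1\models f_1,\gamma_2\models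 f_2$. w$_{\text{pvm}}$PCL formulas ($PCL(D,P)$): $\zeta::=d\mid f\mid\zeta\oplus\zeta\mid\zeta\otimes\zeta\mid\zeta\uplus\zeta\mid *\zeta$; semantics $\|\zeta\|:C(P)\to D$: $\|d\|(\gamma)=d$; $\|f\|(\gamma)\in\{0,1\}$ is $1$ iff $\gamma\models f$; $\oplus,\otimes$ pointwise; $\|\zeta_1\uplus\zeta_2\|(\gamma)=\bigoplus(\|\zeta_1\|(\gamma_1)\otimes\|\zeta_2\|(\gamma_2))$ over disjoint $\gamma_1,\gamma_2\in C(P)$ with union $\gamma$; $\|*\zeta\|(\gamma)=\bigoplus_{n>0}\bigoplus\mathrm{val}(\|\zeta\|(\gamma_1),\dots,\|\zeta\|(\gamma_n))$ over pairwise disjoint $\gamma_1,\dots,\gamma_n\in C(P)$ with union $\gamma$. The closure is $\sim\zeta:=\zeta\oplus(\zeta\uplus 1)$. *)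

From Stdlib Require Import Permutation.
From mathcomp Require Import all_boot.
Set Implicit Arguments. Unset Strict Implicit. Unset Printing Implicit Defensive.

(* val is given on all of seq D; only its values on nonempty sequences
   (D^+) matter and only those are constrained by the axioms. *)
Record pvMonoid := PVMonoid {
  pv_car :> Type;
  pv_add : pv_car -> pv_car -> pv_car;
  pv_zero : pv_car;
  pv_val : seq pv_car -> pv_car;
  pv_mul : pv_car -> pv_car -> pv_car;
  pv_one : pv_car;
  pv_addA : forall a b c, pv_add a (pv_add b c) = pv_add (pv_add a b) c;
  pv_addC : forall a b, pv_add a b = pv_add b a;
  pv_add0 : forall a, pv_add pv_zero a = a;
  pv_val1 : forall d, pv_val [:: d] = d;
  pv_val0 : forall s1 s2, pv_val (s1 ++ pv_zero :: s2) = pv_zero;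
  pv_valone : forall n, 0 < n -> pv_val (nseq n pv_one) = pv_one;
  pv_mul0l : forall d, pv_mul pv_zero d = pv_zero;
  pv_mul0r : forall d, pv_mul d pv_zero = pv_zero;
  pv_mul1l : forall d, pv_mul pv_one d = d;
  pv_mul1r : forall d, pv_mul d pv_one = d;
  pv_idem : forall d, pv_add d d = d;
  pv_valsym : forall s t, s <> [::] -> Permutation s t -> pv_val s = pv_val t
}.

(* An interaction is a set of ports, a configuration a set of interactions. *)
Definition config (P : finType) := {set {set P}}.

Definition isC (P : finType) (g : config P) : bool :=
  (g != set0) && (set0 \notin g).

Inductive pil (P : finType) : Type :=
| pilTrue
| pilPort of P
| pilNeg of pil P
| pilOr of pil P & pil P.

Fixpoint pil_sat (P : finType) (a : {set P}) (phi : pil P) : bool :=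
  match phi with
  | pilTrue => true
  | pilPort p => p \in a
  | pilNeg phi1 => ~~ pil_sat a phi1
  | pilOr phi1 phi2 => pil_sat a phi1 || pil_sat a phi2
  end.

Inductive pcl (P : finType) : Type :=
| pclTrue
| pclPil of pil P
| pclNeg of pcl P
| pclUnion of pcl P & pcl P
| pclPlus of pcl P & pcl P.

Fixpoint pcl_sat (P : finType) (g : config P) (f : pcl P) : bool :=
  match f with
  | pclTrue => true
  | pclPil phi => [forall a in g, pil_sat a phi]
  | pclNeg f1 => ~~ pcl_sat g f1
  | pclUnion f1 f2 => pcl_sat g f1 || pcl_sat g f2
  | pclPlus f1 f2 =>
      [exists g1 : config P, exists g2 : config P,
        [&& isC g1, isC g2, g == g1 :|: g2, pcl_sat g1 f1 & pcl_sat g2 f2]]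
  end.

Inductive wpcl (D : pvMonoid) (P : finType) : Type :=
| wConst of pv_car D
| wPcl of pcl P
| wOplus of wpcl D P & wpcl D P
| wOtimes of wpcl D P & wpcl D P
| wUplus of wpcl D P & wpcl D P
| wStar of wpcl D P.

Section Sem.
Variables (D : pvMonoid) (P : finType).


Definition is_decomp (g : config P) n (t : n.-tuple (config P)) : bool :=
  [&& [forall i, isC (tnth t i)],
      [forall i, forall j, (i != j) ==> [disjoint tnth t i & tnth t j]]
    & (\bigcup_(i < n) tnth t i) == g].

Fixpoint sem (z : wpcl D P) (g : config P) : D :=
  match z with
  | wConst d => d
  | wPcl f => if pcl_sat g f then pv_one D else pv_zero D
  | wOplus z1 z2 => pv_add (sem z1 g) (sem z2 g)
  | wOtimes z1 z2 => pv_mul (sem z1 g) (sem z2 g)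
  | wUplus z1 z2 =>
      \big[@pv_add D/pv_zero D]_(p : config P * config P |
                  [&& isC p.1, isC p.2, [disjoint p.1 & p.2] & p.1 :|: p.2 == g])
        pv_mul (sem z1 p.1) (sem z2 p.2)
  | wStar z1 =>
      (* the sum over n > 0 is truncated at n = #|g|: for n > #|g| there is no
         decomposition of g into n pairwise disjoint nonempty parts, so those
         terms are empty sums (= 0) *)
      \big[@pv_add D/pv_zero D]_(n < #|g|.+1 | 0 < n)
        \big[@pv_add D/pv_zero D]_(t : n.-tuple (config P) | is_decomp g t)
          pv_val (map (sem z1) t)
  end.

End Sem.

Definition wClosure (D : pvMonoid) (P : finType) (z : wpcl D P) : wpcl D P :=
  wOplus z (wUplus z (wConst P (pv_one D))).

From mathcomp Require Import all_boot.
From HB Require Import structures.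

Set Implicit Arguments.
Unset Strict Implicit.
Unset Printing Implicit Defensive.

(* Since the right factor of [zeta (uplus) 1] is constantly 1, its value at g
   is the sum of [zeta] over the left parts g1 of the disjoint splittings
   g = g1 U g2 with g1, g2 in C(P).  The right part is forced to be g \ g1, which
   lies in C(P) exactly when g1 is a proper subset of g; adding the summand
   [zeta](g) of the closure yields the sum over all g1 in C(P) below g. *)

HB.instance Definition _ (D : pvMonoid) :=
  SemiGroup.isComLaw.Build (pv_car D) (@pv_add D) (@pv_addA D) (@pv_addC D).

Lemma setUDKl (T : finType) (A B : {set T}) : A \subset B -> A :|: B :\: A = B.
Proof. by move=> sAB; rewrite setDE setUIr setUCr setIT; apply/setUidPr. Qed.

Lemma disjoint_setD (T : finType) (A B : {set T}) : [disjoint A & B :\: A].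
Proof. by rewrite disjoints_subset setDE setCI setCK subsetUr. Qed.

Lemma setUKl_disjoint (T : finType) (A B : {set T}) :
  [disjoint A & B] -> (A :|: B) :\: A = B.
Proof.
by move=> dAB; rewrite setDUl setDv set0U; apply/setDidPl; rewrite disjoint_sym.
Qed.

Section ClosureSum.
Variables (D : pvMonoid) (P : finType).

Lemma isC_setD (g g' : config P) :
  set0 \notin g -> isC (g :\: g') = ~~ (g \subset g').
Proof. by move=> g0; rewrite /isC setD_eq0 inE (negbTE g0) andbF andbT. Qed.

Lemma isC_splitting_setD (g g' : config P) : isC g ->
  [&& isC g', isC (g :\: g'), [disjoint g' & g :\: g'] & g' :|: g :\: g' == g]
  = isC g' && (g' \proper g).
Proof.
case/andP=> _ g0; rewrite disjoint_setD isC_setD // properE andTb.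
suff -> : (g' :|: g :\: g' == g) = (g' \subset g) by rewrite (andbC (~~ _)).
by apply/eqP/idP => [<- | /setUDKl //]; apply: subsetUl.
Qed.

Lemma sem_uplus_one (z : wpcl D P) (g : config P) : isC g ->
  sem (wUplus z (wConst P (pv_one D))) g =
  \big[@pv_add D/pv_zero D]_(g' : config P | isC g' && (g' \proper g)) sem z g'.
Proof.
move=> Cg; rewrite /= (eq_bigr (fun p => sem z p.1)) => [|p _]; last first.
  exact: pv_mul1r.
rewrite (reindex_onto (fun g' => (g', g :\: g')) fst) /=.
  by apply: eq_bigl => g'; rewrite eqxx andbT isC_splitting_setD.
by case=> g1 g2 /and4P [_ _ d12 /eqP <-] /=; rewrite setUKl_disjoint.
Qed.

End ClosureSum.

Theorem mainTheorem9 (D : pvMonoid) (P : finType) (hP : 0 < #|P|)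
  (z : wpcl D P) (g : config P) :
  isC g ->
  sem (wClosure z) g =
  \big[@pv_add D/pv_zero D]_(g' : config P | isC g' && (g' \subset g))
    sem z g'.
Proof.
move=> Cg; rewrite (bigD1 g) /=; last by rewrite Cg subxx.
congr (pv_add _ _).
rewrite -/(sem (wUplus z (wConst P (pv_one D))) g) sem_uplus_one //.
by apply: eq_bigl => g'; rewrite properEneq andbA andbAC.
Qed.
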